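(* Let $\mathrm{ReLU}:\mathbb{R}\to\mathbb{R}$ be $\mathrm{ReLU}(x)=\max(x,0)$, and let \[ \mathcal{X}:=\mathrm{Span}\left(\left\{\mathrm{ReLU}(a\,\cdot+b)\,:\, a\in\mathbb{R}\setminus\{0\},\ b\in\mathbb{R}\right\}\right), \] the set of all finite real linear combinations of the functions $x\mapsto \mathrm{ReLU}(ax+b)$ with $a\neq 0$, $b\in\mathbb{R}$. Let \[ \mathcal{Y}:=\left\{f\in C(\mathbb{R})\,:\, \lim_{x\to+\infty}\frac{f(x)}{1+|x|}\ \text{and}\ \lim_{x\to-\infty}\frac{f(x)}{1+|x|}\ \text{both exist in } \mathbb{R}\right\}, \] equipped with the norm \[ \|f\|_{\mathcal{Y}}:=\sup_{x\in\mathbb{R}}\frac{|f(x)|}{1+|x|}. \] Then $\mathcal{X}\subset\mathcal{Y}$ and $\mathcal{X}$ is dense in $\mathcal{Y}$ with respect to $\|\cdot\|_{\mathcal{Y}}$: for every $f\in\mathcal{Y}$ and every $\varepsilon>0$ there exists $h\in\mathcal{X}$ with $\|f-h\|_{\mathcal{Y}}<\varepsilon$.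
   Context: $C(\mathbb{R})$ denotes the space of continuous real-valued functions on $\mathbb{R}$. Elements of $\mathcal{X}$ are two-layer feed-forward neural networks with ReLU activation. *)

From HB Require Import structures.
From mathcomp Require Import all_boot all_order all_algebra.
From mathcomp Require Import all_classical all_reals all_analysis.
Set Implicit Arguments. Unset Strict Implicit. Unset Printing Implicit Defensive.
Import Order.TTheory GRing.Theory Num.Theory.
Import numFieldNormedType.Exports.
Local Open Scope classical_set_scope.
Local Open Scope ring_scope.

Definition relu {R : realType} (x : R) : R := Num.max x 0.

(* X = Span{ x |-> ReLU(a x + b) : a <> 0, b in R }: finite real linear
   combinations, encoded as a finite list of triples (c, a, b) with a <> 0. *)
Definition in_X {R : realType} (h : R -> R) : Prop :=
  exists s : seq (R * R * R),
    (forall t, t \in s -> t.1.2 != 0) /\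
    h = (fun x => \sum_(t <- s) t.1.1 * relu (t.1.2 * x + t.2)).

Definition wY {R : realType} (f : R -> R) (x : R) : R := f x / (1 + `|x|).

Definition in_Y {R : realType} (f : R -> R) : Prop :=
  continuous f /\
  (exists l : R, wY f x @[x --> +oo] --> l) /\
  (exists l : R, wY f x @[x --> -oo] --> l).

Definition normY {R : realType} (f : R -> R) : \bar R :=
  ereal_sup (range (fun x => (`|f x| / (1 + `|x|))%:E)).

Definition lt_e {R : realType} (a b : \bar R) : Prop := (a < b)%E.

(* X is contained in Y: by positive homogeneity,
   ReLU(a x + b) / (1 + |x|) = ReLU((a x + b) / (1 + |x|)), which tends to ReLU(a) at +oo and to ReLU(-a) at -oo.
   Density: if f(x) / (1 + |x|) tends to l at +oo and to m at -oo, then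
   g := f - (l ReLU(x) + m ReLU(-x)) satisfies g(x) / (1 + |x|) -> 0 at both ends, so
   |g x| <= e/2 (1 + |x|) for |x| >= M.  On [-M, M], g is uniformly approximated by a
   piecewise linear interpolant that is constant outside [-M, M]; it lies in X because
   adding a ramp c (ReLU(x - t) - ReLU(x - u)) extends an interpolant from [-M, t] to
   [-M, u], and continuity plus real induction carry the extension up to M.  Outside
   [-M, M] the error |g x - g(M)|, resp. |g x - g(-M)|, is at most e (1 + |x|). *)
From HB Require Import structures.
From mathcomp Require Import all_boot all_order all_algebra.
From mathcomp Require Import all_classical all_reals all_analysis.
From mathcomp Require Import ring lra.
Import Order.TTheory GRing.Theory Num.Theory.
Import numFieldNormedType.Exports.
Local Open Scope classical_set_scope.
Local Open Scope ring_scope.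

Section relu.
Context {R : realType}.
Implicit Types x y : R.

Lemma relu_continuous : continuous (@relu R).
Proof. by move=> x; apply: continuous_max; [exact: cvg_id | exact: cvg_cst]. Qed.

Lemma ger0_relu x : 0 <= x -> relu x = x.
Proof. by move=> x0; rewrite /relu max_l. Qed.

Lemma ler0_relu x : x <= 0 -> relu x = 0.
Proof. by move=> x0; rewrite /relu max_r. Qed.

Lemma relu_subN x : relu x - relu (- x) = x.
Proof.
have [x0|x0] := leP x 0.
  by rewrite ler0_relu // ger0_relu ?oppr_ge0 // sub0r opprK.
by rewrite ger0_relu ?ler0_relu ?subr0 // ?oppr_le0 ltW.
Qed.

Lemma relu_pdivr x y : 0 < y -> relu (x / y) = relu x / y.
Proof. by move=> y0; rewrite /relu maxr_pMl ?invr_ge0 ?ltW // mul0r. Qed.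

End relu.

Section weighted_limits.
Context {R : realType}.
Implicit Types (f g : R -> R) (a b c x : R).

Lemma wYD f g x : wY (fun x => f x + g x) x = wY f x + wY g x.
Proof. exact: mulrDl. Qed.

Lemma wYB f g x : wY (fun x => f x - g x) x = wY f x - wY g x.
Proof. exact: mulrBl. Qed.

Lemma wYB_cvg0 {F : set_system R} {FF : Filter F} f g (l : R) :
  wY f @ F --> l -> wY g @ F --> l -> wY (fun x => f x - g x) @ F --> 0.
Proof.
move=> fl gl; have fgl : (fun x => wY f x - wY g x) @ F --> l - l by exact: cvgB.
by rewrite subrr in fgl; rewrite (eq_cvg _ _ (wYB f g)).
Qed.

Lemma weight_gt0 x : 0 < 1 + `|x| :> R.
Proof. by rewrite ltr_pwDl. Qed.

Lemma inv_weight_cvgy : (1 + `|x|)^-1 @[x --> +oo] --> (0 : R).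
Proof.
apply/gtr0_cvgV0; first by near=> x; exact: weight_gt0.
apply/cvgryPge => A; near=> x.
have Ax : A <= x by near: x; apply: nbhs_pinfty_ge; exact: num_real.
by have := ler_norm x; lra.
Unshelve. all: by end_near. Qed.

Lemma wY_affine_cvgy a b : wY (fun x => a * x + b) x @[x --> +oo] --> a.
Proof.
have wY_affine : {near +oo, (fun x => a + (b - a) * (1 + `|x|)^-1) =1
                            wY (fun x => a * x + b)}.
  near=> x; have x0 : 0 <= x by near: x; apply: nbhs_pinfty_ge; exact: num_real.
  by rewrite /wY ger0_norm //; field; rewrite -(ger0_norm x0) gt_eqF ?weight_gt0.
apply: cvg_trans (near_eq_cvg wY_affine) _.
suff : a + (b - a) * (1 + `|x|)^-1 @[x --> +oo] --> a + (b - a) * 0.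
  by rewrite mulr0 addr0.
by apply: cvgD; [exact: cvg_cst | apply: cvgMr; exact: inv_weight_cvgy].
Unshelve. all: by end_near. Qed.

Lemma wY_relu_cvgy c a b :
  wY (fun x => c * relu (a * x + b)) x @[x --> +oo] --> c * relu a.
Proof.
under eq_fun do rewrite /wY -mulrA -relu_pdivr ?weight_gt0 //.
apply: cvgMr; apply: cvg_comp (wY_affine_cvgy a b) _.
exact: relu_continuous.
Qed.

Lemma wY_relu_cvgNy c a b :
  wY (fun x => c * relu (a * x + b)) x @[x --> -oo] --> c * relu (- a).
Proof.
apply/cvgNy_compNP; under eq_fun do rewrite /comp /wY normrN mulrN -mulNr.
exact: wY_relu_cvgy.
Qed.

End weighted_limits.

Section span_in_Y.
Context {R : realType}.
Implicit Types (f g : R -> R) (a b c : R).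

Lemma in_Y0 : in_Y (fun _ : R => 0).
Proof.
split; first by move=> x; exact: cvg_cst.
by split; exists 0; under eq_fun do rewrite /wY mul0r; exact: cvg_cst.
Qed.

Lemma in_YD f g : in_Y f -> in_Y g -> in_Y (fun x => f x + g x).
Proof.
move=> [fc [[lf fy] [mf fNy]]] [gc [[lg gy] [mg gNy]]]; split.
  by move=> x; apply: cvgD; [exact: fc | exact: gc].
by split; [exists (lf + lg) | exists (mf + mg)];
  under eq_fun do rewrite wYD; exact: cvgD.
Qed.

Lemma in_Y_relu c a b : in_Y (fun x => c * relu (a * x + b)).
Proof.
split; last by split; [exists (c * relu a); exact: wY_relu_cvgy
                      | exists (c * relu (- a)); exact: wY_relu_cvgNy].
move=> x; apply: cvgMr.
apply: (cvg_comp (fun y => a * y + b) relu); last exact: relu_continuous.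
by apply: cvgD; [apply: cvgMr; exact: cvg_id | exact: cvg_cst].
Qed.

Lemma in_X_in_Y (h : R -> R) : in_X h -> in_Y h.
Proof.
move=> [s [_ ->]]; elim: s => [|t s IHs].
  by under eq_fun do rewrite big_nil; exact: in_Y0.
under eq_fun do rewrite big_cons; exact: in_YD (in_Y_relu _ _ _) IHs.
Qed.

End span_in_Y.

Section span_closure.
Context {R : realType}.
Implicit Types (f g : R -> R) (a b c k t u : R).

Lemma eq_in_X f g : f =1 g -> in_X f -> in_X g.
Proof. by move=> /funext ->. Qed.

Lemma in_XD f g : in_X f -> in_X g -> in_X (fun x => f x + g x).
Proof.
move=> [s1 [s1P ->]] [s2 [s2P ->]]; exists (s1 ++ s2); split.
  by move=> t; rewrite mem_cat => /orP[/s1P|/s2P].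
by apply: funext => x; rewrite big_cat.
Qed.

Lemma in_X_relu c a b : a != 0 -> in_X (fun x => c * relu (a * x + b)).
Proof.
move=> a0; exists [:: (c, a, b)]; split; first by move=> t; rewrite inE => /eqP ->.
by apply: funext => x; rewrite big_seq1.
Qed.

Lemma in_X_ramp c t u : in_X (fun x => c * (relu (x - t) - relu (x - u))).
Proof.
apply: (@eq_in_X (fun x => c * relu (1 * x + - t) + - c * relu (1 * x + - u))).
  by move=> x; rewrite !mul1r mulNr mulrBr.
by apply: in_XD; apply: in_X_relu; rewrite oner_eq0.
Qed.

Lemma in_X_cst k : in_X (fun _ => k).
Proof.
have kE x : k * relu (1 * x + 1) + - k * relu (- 1 * x + - 1)
            + (- k * relu (1 * x + 0) + k * relu (- 1 * x + 0)) = k.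
  rewrite !mul1r !mulN1r !addr0 -opprD.
  transitivity (k * ((relu (x + 1) - relu (- (x + 1))) - (relu x - relu (- x)))).
    by ring.
  by rewrite !relu_subN; ring.
apply: eq_in_X kE _.
by apply: in_XD; apply: in_XD; apply: in_X_relu; rewrite ?oppr_eq0 oner_eq0.
Qed.

End span_closure.

Section real_induction.
Context {R : realType}.

Lemma real_induction (P : R -> Prop) (a b : R) : a <= b -> P a ->
  (forall s, a <= s <= b -> exists2 d : R, 0 < d &
     forall t u, a <= t -> t <= u -> u <= b -> s - d < t -> u < s + d ->
       P t -> P u) ->
  P b.
Proof.
move=> ab Pa step; pose S := [set t | [/\ a <= t, t <= b & P t]].
have S_sup : has_sup S by split; [exists a | exists b => t []].
have a_le_s : a <= sup S by apply: sup_upper_bound => //; split.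
have s_le_b : sup S <= b by apply: ge_sup; [exists a; split | move=> t []].
have /step[d d0 stepd] : a <= sup S <= b by rewrite a_le_s s_le_b.
have [t [a_le_t t_le_b Pt] st] := sup_adherent d0 S_sup.
have t_le_s : t <= sup S by apply: sup_upper_bound.
pose u := Num.min b (sup S + d / 2).
have u_le : u <= sup S + d / 2 by rewrite /u ge_min lexx orbT.
have u_le_b : u <= b by rewrite /u ge_min lexx.
have t_le_u : t <= u by rewrite /u le_min t_le_b /=; lra.
have Pu : P u by apply: (stepd t) => //; lra.
have u_le_s : u <= sup S by apply: sup_upper_bound => //; split => //; lra.
(* [u <= sup S] is only possible when the minimum defining [u] is [b]. *)
have [b_le|b_gt] := leP b (sup S + d / 2); first by move: Pu; rewrite /u min_l.
by move: u_le_s; rewrite /u (min_r (ltW b_gt)); lra.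
Qed.

End real_induction.

Section clamped_approximation.
Context {R : realType}.
Implicit Types (g : R -> R) (e a t u : R).

Definition X_clamped_approx g e a t := exists2 p : R -> R, in_X p &
  [/\ forall x, x <= a -> p x = g a, forall x, t <= x -> p x = g t
    & forall x, a <= x <= t -> `|g x - p x| <= e].

Lemma convex_norm_le (l x y e : R) : 0 <= l <= 1 ->
  `|x| <= e -> `|y| <= e -> `|(1 - l) * x + l * y| <= e.
Proof.
move=> /andP[l0 l1] xe ye; apply: (le_trans (ler_normD _ _)).
rewrite !normrM (ger0_norm l0) ger0_norm ?subr_ge0 //; nra.
Qed.

Lemma X_clamped_approx_extend g e a t u : a <= t -> t <= u ->
  (forall x, t <= x <= u -> `|g x - g t| <= e /\ `|g x - g u| <= e) ->
  X_clamped_approx g e a t -> X_clamped_approx g e a u.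
Proof.
move=> a_le_t t_le_u osc [p pX [p_left p_right p_approx]].
have [<-|t_neq_u] := eqVneq t u; first by exists p.
have t_lt_u : t < u by rewrite lt_neqAle t_neq_u.
pose c := (g u - g t) / (u - t).
exists (fun x => p x + c * (relu (x - t) - relu (x - u))).
  by apply: in_XD => //; exact: in_X_ramp.
split=> x.
- by move=> x_le_a; rewrite p_left // !ler0_relu ?subr_le0; lra.
- move=> u_le_x; rewrite p_right; last lra.
  rewrite !ger0_relu ?subr_ge0; try lra.
  by rewrite /c; field; rewrite subr_eq0 eq_sym.
move=> /andP[a_le_x x_le_u]; have [x_le_t|t_lt_x] := leP x t.
  rewrite !ler0_relu ?subr_le0; try lra.
  by rewrite subrr mulr0 addr0; apply: p_approx; rewrite a_le_x.
rewrite p_right ?(ltW t_lt_x) // ger0_relu ?ler0_relu ?subr_ge0 ?subr_le0; try lra.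
have /osc[xt xu] : t <= x <= u by rewrite (ltW t_lt_x) x_le_u.
pose l := (x - t) / (u - t).
have l01 : 0 <= l <= 1.
  by rewrite /l divr_ge0 ?subr_ge0 ?(ltW t_lt_x) //= ler_pdivrMr ?subr_gt0 // mul1r; lra.
have -> : g x - (g t + c * (x - t - 0)) = (1 - l) * (g x - g t) + l * (g x - g u).
  by rewrite /l /c; field; rewrite subr_eq0 eq_sym.
exact: convex_norm_le.
Qed.

Lemma continuous_X_clamped_approx g e a b : continuous g -> 0 < e -> a <= b ->
  X_clamped_approx g e a b.
Proof.
move=> gc e0 ab; apply: (@real_induction _ (X_clamped_approx g e a) a) => //.
  exists (fun=> g a); first exact: in_X_cst.
  split=> [//|//|x /andP[a_le_x x_le_a]].
  by rewrite (@le_anti _ _ x a) ?a_le_x ?x_le_a // subrr normr0 ltW.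
move=> s _; have e2 : 0 < e / 2 by rewrite divr_gt0.
have /cvgrPdist_lt/(_ _ e2)/nbhs_ballP[d /= d0 gd] := gc s.
exists d => // t u a_le_t t_le_u _ st us; apply: X_clamped_approx_extend => // x xtu.
have g_near y : t <= y <= u -> `|g s - g y| < e / 2.
  move=> /andP[ty yu]; apply: gd; rewrite /ball /= ltr_distl; apply/andP; split; lra.
have gx := g_near x xtu.
have gt : `|g s - g t| < e / 2 by apply: g_near; rewrite lexx t_le_u.
have gu : `|g s - g u| < e / 2 by apply: g_near; rewrite lexx t_le_u.
have := ler_distD (g s) (g x) (g t); have := ler_distD (g s) (g x) (g u).
by rewrite [`|g x - g s|]distrC; split; lra.
Qed.

End clamped_approximation.

Section weighted_approximation.
Context {R : realType}.
Implicit Types (g h : R -> R) (c e x y : R).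

Lemma normY_le h c : (forall x, `|h x| <= c * (1 + `|x|)) -> (normY h <= c%:E)%E.
Proof.
move=> hc; apply: ub_ereal_sup => _ [x _ <-].
by rewrite lee_fin ler_pdivrMr ?weight_gt0.
Qed.

Lemma wY_cvgy0_le g e : wY g x @[x --> +oo] --> 0 -> 0 < e ->
  exists M, forall x, M < x -> `|g x| <= e * (1 + `|x|).
Proof.
move=> /cvgrPdist_le gy e0; have [M [_ gM]] := gy e e0.
exists M => x /gM; rewrite sub0r normrN /wY normrM normfV.
by rewrite (gtr0_norm (weight_gt0 x)) ler_pdivrMr ?weight_gt0.
Qed.

Lemma weighted_tail_dist g c x y : 0 <= c -> `|y| <= `|x| ->
  `|g x| <= c * (1 + `|x|) -> `|g y| <= c * (1 + `|y|) ->
  `|g x - g y| <= (c + c) * (1 + `|x|).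
Proof.
move=> c0 yx gx gy; apply: (le_trans (ler_normB _ _)).
have : c * (1 + `|y|) <= c * (1 + `|x|) by apply: ler_wpM2l; lra.
lra.
Qed.

Lemma vanishing_weighted_approx g e : continuous g ->
  wY g x @[x --> +oo] --> 0 -> wY g x @[x --> -oo] --> 0 -> 0 < e ->
  exists2 p, in_X p & forall x, `|g x - p x| <= e * (1 + `|x|).
Proof.
move=> gc gy gNy e0; have e2 : 0 < e / 2 by rewrite divr_gt0.
have gNy' : wY (fun x => g (- x)) x @[x --> +oo] --> 0.
  by move/cvgNy_compNP : gNy; under eq_fun do rewrite /comp /wY normrN.
have [M1 gM1] := wY_cvgy0_le _ _ gy e2.
have [M2 gM2] := wY_cvgy0_le _ _ gNy' e2.
have [M1_le M2_le] := (ler_norm M1, ler_norm M2).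
have [M1_ge0 M2_ge0] := (normr_ge0 M1, normr_ge0 M2).
pose M := 1 + `|M1| + `|M2|.
have [M_gt0 M1_lt_M M2_lt_M] : [/\ 0 < M, M1 < M & M2 < M] by split; rewrite /M; lra.
have gM1M : `|g M| <= e / 2 * (1 + `|M|) by apply: gM1.
have gM2M : `|g (- M)| <= e / 2 * (1 + `|- M|) by rewrite normrN; apply: gM2.
have [p pX [p_left p_right p_approx]] : X_clamped_approx g e (- M) M.
  by apply: continuous_X_clamped_approx => //; lra.
exists p => // x; have e_split : e = e / 2 + e / 2 by rewrite -splitr.
have [M_le_x|x_lt_M] := leP M x.
  rewrite p_right // e_split; apply: weighted_tail_dist gM1M; first lra.
    by rewrite (gtr0_norm M_gt0) ger0_norm; lra.
  by apply: gM1; lra.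
have [x_le_NM|NM_lt_x] := leP x (- M).
  rewrite p_left // e_split; apply: weighted_tail_dist gM2M; first lra.
    by rewrite normrN (gtr0_norm M_gt0) ler0_norm; lra.
  by move: (gM2 (- x)); rewrite opprK normrN; apply; lra.
apply: le_trans (p_approx x _) _; first by rewrite (ltW NM_lt_x) (ltW x_lt_M).
by rewrite ler_peMr ?(ltW e0) // lerDl.
Qed.

End weighted_approximation.

Lemma in_X_dense_in_Y {R : realType} (f : R -> R) (e : R) : in_Y f -> 0 < e ->
  exists h, in_X h /\ lt_e (normY (fun x => f x - h x)) e%:E.
Proof.
move=> [fc [[l fy] [m fNy]]] e0; have e2 : 0 < e / 2 by rewrite divr_gt0.
(* [q] has the same asymptotic slopes as [f], so [f - q] vanishes relative to the weight. *)
pose q x := l * relu (1 * x + 0) + m * relu (- 1 * x + 0).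
have qX : in_X q by apply: in_XD; apply: in_X_relu; rewrite ?oppr_eq0 oner_eq0.
have [qc _] : in_Y q by exact: in_X_in_Y.
have [relu1 reluN1] : relu (1 : R) = 1 /\ relu (- 1 : R) = 0.
  by rewrite ger0_relu ?ler0_relu ?oppr_le0.
have qy : wY q x @[x --> +oo] --> l * relu 1 + m * relu (- 1).
  by under eq_fun do rewrite wYD; apply: cvgD; exact: wY_relu_cvgy.
have qNy : wY q x @[x --> -oo] --> l * relu (- 1) + m * relu (- - 1).
  by under eq_fun do rewrite wYD; apply: cvgD; exact: wY_relu_cvgNy.
rewrite relu1 reluN1 mulr1 mulr0 addr0 in qy.
rewrite opprK relu1 reluN1 mulr1 mulr0 add0r in qNy.
have [p pX fqp] : exists2 p, in_X p &
    forall x, `|f x - q x - p x| <= e / 2 * (1 + `|x|).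
  apply: vanishing_weighted_approx e2.
  - by move=> x; apply: cvgB; [exact: fc | exact: qc].
  - exact: wYB_cvg0 fy qy.
  - exact: wYB_cvg0 fNy qNy.
exists (fun x => q x + p x); split; first exact: in_XD.
have normY_le_e2 : (normY (fun x => (f x - (q x + p x))%R) <= (e / 2)%:E)%E.
  by apply: normY_le => x; rewrite opprD addrA.
by apply: le_lt_trans normY_le_e2 _; rewrite lte_fin; lra.
Qed.

Theorem theorem1p1 (R : realType) :
  (forall h : R -> R, in_X h -> in_Y h) /\
  (forall f : R -> R, in_Y f ->
     forall eps : R, 0 < eps ->
       exists h : R -> R, in_X h /\ lt_e (normY (fun x => f x - h x)) (eps%:E)).
Proof.
split=> [|f fY eps eps0]; first exact: in_X_in_Y.
exact: in_X_dense_in_Y.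
Qed.
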